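(* Let $\ell\geq 2$ and $n=4\ell+2$. Then $\mathrm{capt}(H(n),2)=\ell+2(n-4)$.
   Context: The graph $H(7)$ has vertex set $\{1,\dots,7\}$: vertices $6,2,1,4$ form a path $6-2-1-4$; vertices $3$ and $5$ are each adjacent to all of $6,2,1,4$ and not adjacent to each other; vertex $7$ is adjacent exactly to $6$, $4$ and $3$. For $n\geq 8$, $H(n)$ is obtained from $H(n-1)$ by adding vertex $n$ adjacent exactly to $n-1$, $n-3$ and $n-4$. All graphs are reflexive (every vertex is considered adjacent to itself). The game of $k$ cops and $m$ robbers on $G$: in round 0 the cops first choose starting vertices, then the robbers choose theirs. In each round $i\geq 1$, all cops move (each to an adjacent vertex or staying), then all robbers move likewise. Several players may occupy the same vertex. Whenever a cop and some robbers occupy the same vertex, those robbers are captured and take no further part in the game. Both sides have full information. The cops win if all robbers are captured after finitely many rounds. For a cop-win graph $G$, $\mathrm{capt}(G,m)$ is the index of the round in which the last robber is captured when one cop plays to minimize this index and $m$ robbers play to maximize it. ($H(n)$ is cop-win.) *)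

From mathcomp Require Import all_boot.
Set Implicit Arguments. Unset Strict Implicit. Unset Printing Implicit Defensive.

(* Vertices 1..n of the paper are represented by the ordinals 0..n-1 of 'I_n
   (paper vertex v <-> ordinal v-1).  [hedge a b] (a < b, 1-indexed) lists the
   edges {a,b} of H(n) whose larger endpoint is b. *)
Definition H7_edges : seq (nat * nat) :=
  [:: (2,6); (1,2); (1,4);
      (3,6); (2,3); (1,3); (3,4);
      (5,6); (2,5); (1,5); (4,5);
      (6,7); (4,7); (3,7)].

Definition hedge (a b : nat) : bool :=
  if b <= 7 then (a, b) \in H7_edges
  else [|| a == b - 1, a == b - 3 | a == b - 4].

(* Reflexive adjacency of H(n) (meaningful for n >= 7). *)
Definition Hgraph (n : nat) : rel 'I_n :=
  fun x y => [|| x == y, hedge x.+1 y.+1 | hedge y.+1 x.+1].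

Section Game.
Variables (V : finType) (adj : rel V) (m : nat).

(* robber positions: None = captured *)
Definition rstate := {ffun 'I_m -> option V}.

Definition capture (c : V) (R : rstate) : rstate :=
  [ffun i => if R i == Some c then None else R i].

Definition all_captured (R : rstate) : bool := [forall i, R i == None].

Definition robber_move (R R' : rstate) : bool :=
  [forall i, match R i, R' i with
             | None, None => true
             | Some x, Some y => adj x y
             | _, _ => false end].

(* [win_within k c R]: from the position reached at the end of some round i
   (cop at c, robbers R, captures already applied), the cop can force that all
   robbers are captured by the end of round i + k. *)
Fixpoint win_within (k : nat) (c : V) (R : rstate) : bool :=
  all_captured R ||
  match k with
  | 0 => false
  | k'.+1 =>
      [exists c' : V, adj c c' &&
        (let R1 := capture c' R in
         all_captured R1 ||
         [forall R2 : rstate,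
            robber_move R1 R2 ==> win_within k' c' (capture c' R2)])]
  end.

(* The cop can ensure that the last robber is captured in a round of index
   at most T (round 0 = placement round). *)
Definition capt_le (T : nat) : bool :=
  [exists c0 : V, [forall r : {ffun 'I_m -> V},
     win_within T c0 (capture c0 [ffun i => Some (r i)])]].

Definition capt_is (T : nat) : Prop :=
  capt_le T /\ forall T', T' < T -> ~~ capt_le T'.

End Game.

Arguments win_within {V} adj {m} k c R.
Arguments capt_le {V} adj m T.
Arguments capt_is {V} adj m T.
Arguments Hgraph n : clear implicits.

From mathcomp Require Import all_boot zify.
Set Implicit Arguments. Unset Strict Implicit. Unset Printing Implicit Defensive.

(* Label the vertices of H(n) by 0, ..., n - 1 (paper vertex v is v - 1): then x and y
   are adjacent iff |x - y| is 1, 3 or 4, or {x, y} = {0, 2} (HgraphE).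
   Against a single robber, [capture_time n c r] is the number of rounds a cop at c needs
   to catch a robber at r: the greedy cop move [chase_move] lowers it whatever the robber
   does, while the robber can answer any cop move so that it drops by at most one.  Its
   largest value is [max_time n] = n - 4 + (n + 1) %/ 4.
   Against two robbers the cop chases one and then the other, so that
   capture_time c a + max_time is a decreasing potential, at most (n - 4) + max_time when
   the cop starts at 0.  Conversely, both robbers start on a vertex whose capture time is
   at least n - 4 and keep [evasion_bound] from dropping by more than one per round: while
   neither robber is next to the cop it is the smaller capture time plus max_time, and when
   the cop threatens one robber the other can flee to a vertex at capture time max_time.
   For n = 4l + 2 the two bounds meet at (n - 4) + max_time = l + 2(n - 4). *)

Section PotentialStrategies.
Variables (V : finType) (adj : rel V) (m : nat).
Implicit Types (c : V) (R : rstate V m).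

Definition robber_free c R := [forall i, R i != Some c].

Lemma robber_free_capture c R : robber_free c (capture c R).
Proof. by apply/forallP => i; rewrite ffunE; case: ifP => // /negbT. Qed.

Lemma all_captured_capture c R : all_captured R -> all_captured (capture c R).
Proof. by move=> /forallP capR; apply/forallP => i; rewrite ffunE (eqP (capR i)). Qed.

Lemma robber_move_captured R R' :
  all_captured R -> robber_move adj R R' -> all_captured R'.
Proof.
move=> /forallP capR /forallP mvR; apply/forallP => i.
by move: (mvR i); rewrite (eqP (capR i)); case: (R' i).
Qed.

Section CopStrategy.
Variable pot : V -> rstate V m -> nat.
Hypothesis pot_gt0 : forall c R, robber_free c R -> ~~ all_captured R -> 0 < pot c R.
Hypothesis pot_chase : forall c R, robber_free c R -> ~~ all_captured R ->
  exists2 c', adj c c' & forall R', robber_move adj (capture c' R) R' ->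
    pot c' (capture c' R') < pot c R.

Lemma win_within_pot k c R : robber_free c R -> pot c R <= k -> win_within adj k c R.
Proof.
elim: k c R => [|k IH] c R freeR pot_le /=; case: (boolP (all_captured R)) => //= live.
  by move: pot_le; rewrite leqn0 => /eqP pot0; move: (pot_gt0 freeR live); rewrite pot0.
have [c' adj_cc' dec] := pot_chase freeR live.
apply/existsP; exists c'; rewrite adj_cc' /=; apply/orP; right.
apply/forallP => R'; apply/implyP => mvR'; apply: IH; first exact: robber_free_capture.
by rewrite -ltnS (leq_trans (dec _ mvR')).
Qed.

End CopStrategy.

Section RobberStrategy.
Variable pot : V -> rstate V m -> nat.
Hypothesis pot_captured : forall c R, all_captured R -> pot c R = 0.
Hypothesis pot_evade : forall c R c', robber_free c R -> 1 < pot c R -> adj c c' ->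
  exists2 R', robber_move adj (capture c' R) R' & pot c R <= (pot c' (capture c' R')).+1.

Lemma not_win_within_pot k c R : robber_free c R -> k < pot c R -> ~~ win_within adj k c R.
Proof.
have live c1 R1 : 0 < pot c1 R1 -> ~~ all_captured R1.
  by apply: contraTN => /pot_captured ->.
elim: k c R => [|k IH] c R freeR pot_gt; have pot_gt0 := leq_ltn_trans (leq0n _) pot_gt.
  by rewrite /= orbF (live c).
rewrite /= negb_or (live c) //=.
rewrite negb_exists; apply/forallP => c'; rewrite negb_and -implybE; apply/implyP => adj_cc'.
have [R' mvR' delay] := pot_evade freeR (leq_ltn_trans (ltn0Sn k) pot_gt) adj_cc'.
have pot_gt' : k < pot c' (capture c' R') by rewrite -ltnS (leq_trans pot_gt delay).
rewrite negb_or; apply/andP; split.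
  apply: contraL pot_gt' => /robber_move_captured/(_ mvR')/(all_captured_capture c').
  by move/pot_captured ->.
rewrite negb_forall; apply/existsP; exists R'; rewrite negb_imply mvR'.
exact: IH (robber_free_capture _ _) pot_gt'.
Qed.

End RobberStrategy.
End PotentialStrategies.

Section TwoRobbers.
Variables (V : finType) (adj : rel V).
Implicit Types (c : V) (o : option V) (R : rstate V 2).

Definition robber_step o o' :=
  match o, o' with None, None => true | Some x, Some y => adj x y | _, _ => false end.

Definition capture1 c o := if o == Some c then None else o.

Definition rpair o0 o1 : rstate V 2 := [ffun i => if i == ord0 then o0 else o1].

Lemma forall_ord2 (P : pred 'I_2) : [forall i, P i] = P ord0 && P ord_max.
Proof.
apply/forallP/andP => [allP | [P0 P1] [[|[|//]] lt_i2]]; first by split; apply: allP.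
  by rewrite (_ : Ordinal _ = ord0) //; apply: val_inj.
by rewrite (_ : Ordinal _ = ord_max) //; apply: val_inj.
Qed.

Lemma robber_freeE c R : robber_free c R = (R ord0 != Some c) && (R ord_max != Some c).
Proof. exact: forall_ord2. Qed.

Lemma all_capturedE R : all_captured R = (R ord0 == None) && (R ord_max == None).
Proof. exact: forall_ord2. Qed.

Lemma robber_moveE R R' :
  robber_move adj R R' = robber_step (R ord0) (R' ord0) && robber_step (R ord_max) (R' ord_max).
Proof. exact: forall_ord2. Qed.

Lemma captureE c R i : capture c R i = capture1 c (R i).
Proof. by rewrite ffunE. Qed.

Lemma rpair0 o0 o1 : rpair o0 o1 ord0 = o0.
Proof. by rewrite ffunE. Qed.

Lemma rpair1 o0 o1 : rpair o0 o1 ord_max = o1.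
Proof. by rewrite ffunE. Qed.

Lemma capture1_some c x : capture1 c (Some x) = if x == c then None else Some x.
Proof. by []. Qed.

Lemma robber_step_none o : robber_step None o -> o = None.
Proof. by case: o. Qed.

Lemma robber_step_some x o : robber_step (Some x) o -> exists2 y, o = Some y & adj x y.
Proof. by case: o => // y; exists y. Qed.

End TwoRobbers.

Definition hadj (x y : nat) : bool :=
  [|| x == y, x == y.+1, y == x.+1, x == y + 3, y == x + 3, x == y + 4, y == x + 4,
      (x == 0) && (y == 2) | (x == 2) && (y == 0)].

Lemma hadjxx x : hadj x x.
Proof. by rewrite /hadj eqxx. Qed.

Lemma hadj_cases x y : hadj x y ->
  y = x \/ y = x.+1 \/ x = y.+1 \/ y = x + 3 \/ x = y + 3 \/ y = x + 4 \/ x = y + 4 \/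
  (x = 0 /\ y = 2) \/ (x = 2 /\ y = 0).
Proof. rewrite /hadj; lia. Qed.

Lemma nonadj_neq x y : ~~ hadj x y -> (x == y) = false.
Proof. rewrite /hadj; lia. Qed.

Lemma nonadj_adj_neq c x c' : ~~ hadj c x -> hadj c c' -> x != c'.
Proof. by move=> nadj_cx adj_cc'; apply: contraNneq nadj_cx => ->. Qed.

Lemma nonadj_cases x y : ~~ hadj x y ->
  (y + 5 <= x \/ (x = y + 2 /\ 0 < y)) \/
  (0 < x /\ x + 2 <= y /\ (y - x) %% 4 = 2) \/
  (x + 5 <= y /\ (y - x) %% 4 = 1) \/
  (x + 7 <= y /\ (y - x) %% 4 = 3) \/
  (x + 8 <= y /\ (y - x) %% 4 = 0) \/
  (x = 0 /\ 6 <= y /\ y %% 4 = 2).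
Proof. by rewrite /hadj; lia. Qed.

Lemma H7_edges_lt p q : (p, q) \in H7_edges -> p < q <= 7.
Proof. by rewrite /H7_edges !inE !xpair_eqE; lia. Qed.

Lemma hedge_gt7 a b : 7 < b -> hedge a b = [|| a == b - 1, a == b - 3 | a == b - 4].
Proof. by rewrite /hedge ltnNge => /negbTE ->. Qed.

Lemma hedge_hadj a b : [|| a == b, hedge a.+1 b.+1 | hedge b.+1 a.+1] = hadj a b.
Proof.
have hedge_rev x y : x < y -> x <= 7 -> hedge y x = false.
  by move=> x_lt x_le; rewrite /hedge x_le; apply/negP => /H7_edges_lt; lia.
case: (ltnP a 7) => a_lt; case: (ltnP b 7) => b_lt.
- by move: a a_lt b b_lt => [|[|[|[|[|[|[|]]]]]]] // _ [|[|[|[|[|[|[|]]]]]]].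
- rewrite hedge_gt7 // (hedge_rev a.+1) //; last lia.
  by rewrite /hadj; apply/idP/idP; lia.
- rewrite [hedge b.+1 _]hedge_gt7 // (hedge_rev b.+1) //; last lia.
  by rewrite /hadj; apply/idP/idP; lia.
- by rewrite !hedge_gt7 // /hadj; apply/idP/idP; lia.
Qed.

Lemma HgraphE n (x y : 'I_n) : Hgraph n x y = hadj x y.
Proof. by rewrite /Hgraph -hedge_hadj. Qed.

Section CaptureTime.
Variable n : nat.
Hypothesis n_ge10 : 10 <= n.
Hypothesis n_mod4 : n %% 4 = 2.

Definition far_time (x : nat) := n - 4 + (x + 2) %/ 4.

Definition capture_time (x y : nat) : nat :=
  if x == y then 0 else if hadj x y then 1 else if y < x then far_time x else
  if (y - x) %% 4 == 1 then n - 4 - x else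
  if (y - x) %% 4 == 2 then (if x == 0 then n - 5 else far_time x) else
  if (y - x) %% 4 == 3 then n - 6 - x else n - 7 - x.

Definition max_time := n - 4 + (n + 1) %/ 4.

Lemma capture_timexx x : capture_time x x = 0.
Proof. by rewrite /capture_time eqxx. Qed.

Lemma capture_time_adj x y : hadj x y -> x != y -> capture_time x y = 1.
Proof. by rewrite /capture_time => -> /negbTE ->. Qed.

Lemma capture_time_behind x y :
  y + 5 <= x \/ (x = y + 2 /\ 0 < y) -> capture_time x y = far_time x.
Proof.
move=> behind; have nadj_xy : ~~ hadj x y by rewrite /hadj; lia.
by rewrite /capture_time nonadj_neq // (negbTE nadj_xy) ifT //; lia.
Qed.

Lemma capture_time_ahead2 x y :
  0 < x -> x + 2 <= y -> (y - x) %% 4 = 2 -> capture_time x y = far_time x.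
Proof.
move=> x_gt0 y_ge y_mod; have nadj_xy : ~~ hadj x y by rewrite /hadj; lia.
by rewrite /capture_time nonadj_neq // (negbTE nadj_xy) y_mod /= ifF ?ifF //; lia.
Qed.

Lemma capture_time_ahead1 x y : x + 5 <= y -> (y - x) %% 4 = 1 -> capture_time x y = n - 4 - x.
Proof.
move=> y_ge y_mod; have nadj_xy : ~~ hadj x y by rewrite /hadj; lia.
by rewrite /capture_time nonadj_neq // (negbTE nadj_xy) y_mod /= ifF //; lia.
Qed.

Lemma capture_time_ahead3 x y : x + 7 <= y -> (y - x) %% 4 = 3 -> capture_time x y = n - 6 - x.
Proof.
move=> y_ge y_mod; have nadj_xy : ~~ hadj x y by rewrite /hadj; lia.
by rewrite /capture_time nonadj_neq // (negbTE nadj_xy) y_mod /= ifF //; lia.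
Qed.

Lemma capture_time_ahead0 x y : x + 8 <= y -> (y - x) %% 4 = 0 -> capture_time x y = n - 7 - x.
Proof.
move=> y_ge y_mod; have nadj_xy : ~~ hadj x y by rewrite /hadj; lia.
by rewrite /capture_time nonadj_neq // (negbTE nadj_xy) y_mod /= ifF //; lia.
Qed.

Lemma capture_time_from0 y : 6 <= y -> y %% 4 = 2 -> capture_time 0 y = n - 5.
Proof.
move=> y_ge y_mod; have nadj_0y : ~~ hadj 0 y by rewrite /hadj; lia.
by rewrite /capture_time nonadj_neq // (negbTE nadj_0y) /= subn0 y_mod.
Qed.

Lemma capture_time_le_far x y : capture_time x y <= far_time x.
Proof. by rewrite /capture_time /far_time; repeat case: ifP; lia. Qed.

Lemma far_time_le_max x : x < n -> far_time x <= max_time.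
Proof. rewrite /far_time /max_time; lia. Qed.

Lemma capture_time_le_max x y : x < n -> capture_time x y <= max_time.
Proof. by move=> x_lt; apply: leq_trans (far_time_le_max x_lt); apply: capture_time_le_far. Qed.

Lemma capture_time_adj_le1 x y : hadj x y -> capture_time x y <= 1.
Proof. by rewrite /capture_time => ->; case: ifP. Qed.

Lemma capture_time_nonadj_ge2 x y : x < n -> y < n -> ~~ hadj x y -> 2 <= capture_time x y.
Proof.
move=> x_lt y_lt nadj_xy.
case: (nonadj_cases nadj_xy) => [?|[[? [? ?]]|[[? ?]|[[? ?]|[[? ?]|[x0 [? ?]]]]]]].
- by rewrite capture_time_behind // /far_time; lia.
- by rewrite capture_time_ahead2 // /far_time; lia.
- by rewrite capture_time_ahead1 //; lia.
- by rewrite capture_time_ahead3 //; lia.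
- by rewrite capture_time_ahead0 //; lia.
- by rewrite x0 capture_time_from0 //; lia.
Qed.

Lemma capture_time_gt0 x y : x < n -> y < n -> x != y -> 0 < capture_time x y.
Proof.
move=> x_lt y_lt x_ne_y; case: (boolP (hadj x y)) => [adj_xy | nadj_xy].
  by rewrite capture_time_adj.
by have := capture_time_nonadj_ge2 x_lt y_lt nadj_xy; lia.
Qed.

Lemma capture_time_ahead_le c y :
  c < y -> (y - c) %% 4 != 2 -> capture_time c y <= maxn 1 (n - 4 - c).
Proof.
move=> y_gt y_mod; case: (boolP (hadj c y)) => [/capture_time_adj_le1 | nadj_cy].
  by move=> ?; apply: leq_trans (leq_maxl _ _).
case: (nonadj_cases nadj_cy) => [?|[[? [? ?]]|[[? ?]|[[? ?]|[[? ?]|[? [? ?]]]]]]].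
- lia.
- lia.
- by rewrite capture_time_ahead1 //; lia.
- by rewrite capture_time_ahead3 //; lia.
- by rewrite capture_time_ahead0 //; lia.
- lia.
Qed.

Lemma capture_time_from0_le y : y %% 4 != 1 -> capture_time 0 y <= n - 5.
Proof.
move=> y_mod; case: (eqVneq 0 y) => [<-|y_gt0]; first by rewrite capture_timexx.
case: (boolP (hadj 0 y)) => [/capture_time_adj_le1 | nadj_0y]; first by lia.
case: (nonadj_cases nadj_0y) => [?|[[? [? ?]]|[[? ?]|[[? ?]|[[? ?]|[? [? ?]]]]]]].
- lia.
- lia.
- lia.
- by rewrite capture_time_ahead3 //; lia.
- by rewrite capture_time_ahead0 //; lia.
- by rewrite capture_time_from0 //; lia.
Qed.

Definition chase_move (x y : nat) : nat :=
  if hadj x y then y else if x == 0 then 1 + (y - 1) %% 4 else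
  if (y < x) || ((y - x) %% 4 == 2) then x - 4 else
  if (y - x) %% 4 == 1 then x + 1 else if (y - x) %% 4 == 3 then x + 3 else x + 4.

Lemma capture_time_down_lt x y : 2 <= x -> capture_time (x - 4) y < far_time x.
Proof.
by move=> x_ge2; apply: leq_ltn_trans (capture_time_le_far _ _) _; rewrite /far_time; lia.
Qed.

Lemma capture_time_up_lt g y y' : g + 4 <= y -> (y - g) %% 4 = 0 -> y < n ->
  hadj y y' -> y' != g -> capture_time g y' < (n - 4 - g).+1.
Proof.
move=> y_ge y_mod y_lt /hadj_cases y'_near y'_ne.
by apply: leq_ltn_trans (capture_time_ahead_le _ _) _; lia.
Qed.

Lemma chase_moveP x y : x < n -> y < n -> ~~ hadj x y ->
  [/\ chase_move x y < n, hadj x (chase_move x y) &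
   forall y', hadj y y' ->
     y' = chase_move x y \/ capture_time (chase_move x y) y' < capture_time x y].
Proof.
move=> x_lt y_lt nadj_xy.
pose spec g := [/\ g < n, hadj x g &
  forall y', hadj y y' -> y' = g \/ capture_time g y' < capture_time x y].
suff [g -> spec_g] : exists2 g, chase_move x y = g & spec g by exact: spec_g.
have down : 0 < x -> capture_time x y = far_time x ->
    (forall y', hadj y y' -> capture_time (x - 4) y' < far_time x) -> spec (x - 4).
  move=> x_gt0 time_eq closer; split => [||y' /closer]; [lia | rewrite /hadj; lia |].
  by rewrite time_eq; right.
have up g : hadj x g -> g + 4 <= y -> (y - g) %% 4 = 0 ->
    capture_time x y = (n - 4 - g).+1 -> spec g.
  move=> adj_xg y_ge y_mod time_eq; split => [|//|y' adj_yy']; first lia.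
  case: (eqVneq y' g) => [-> | y'_ne]; [by left | right].
  by rewrite time_eq; apply: (capture_time_up_lt y_ge).
have chase_moveE : chase_move x y = if x == 0 then 1 + (y - 1) %% 4 else
    if (y < x) || ((y - x) %% 4 == 2) then x - 4 else
    if (y - x) %% 4 == 1 then x + 1 else if (y - x) %% 4 == 3 then x + 3 else x + 4.
  by rewrite /chase_move (negbTE nadj_xy).
case: (nonadj_cases nadj_xy) => [?|[[? [? ?]]|[[? ?]|[[? ?]|[[? ?]|[x0 [? ?]]]]]]].
- exists (x - 4); first by rewrite chase_moveE; repeat case: ifP; lia.
  apply: down; rewrite ?capture_time_behind //; first lia.
  by move=> y' _; apply: capture_time_down_lt; lia.
- exists (x - 4); first by rewrite chase_moveE; repeat case: ifP; lia.
  apply: down; rewrite ?capture_time_ahead2 //.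
  move=> y' /hadj_cases y'_near; case: (leqP 2 x) => [x_ge2 | x_lt2].
    exact: capture_time_down_lt.
  have -> : x - 4 = 0 by lia.
  by apply: leq_ltn_trans (capture_time_from0_le _) _; rewrite /far_time; lia.
- exists (x + 1); first by rewrite chase_moveE; repeat case: ifP; lia.
  by apply: up; rewrite ?capture_time_ahead1 // /hadj; lia.
- exists (x + 3); first by rewrite chase_moveE; repeat case: ifP; lia.
  by apply: up; rewrite ?capture_time_ahead3 // /hadj; lia.
- exists (x + 4); first by rewrite chase_moveE; repeat case: ifP; lia.
  by apply: up; rewrite ?capture_time_ahead0 // /hadj; lia.
- exists 2; first by rewrite chase_moveE x0 /=; lia.
  by rewrite x0 in up *; apply: up; rewrite ?capture_time_from0 //; lia.
Qed.

Lemma hide_move c y : 0 < c -> c < n -> y < n -> y != c ->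
  ~~ ((c + 4 <= y) && ((y - c) %% 4 == 0)) ->
  exists y', [/\ y' < n, hadj y y' & capture_time c y' = far_time c].
Proof.
move=> c_gt0 c_lt y_lt y_ne_c not_aligned.
have behind y' : y' < n -> hadj y y' -> y' + 5 <= c \/ (c = y' + 2 /\ 0 < y') ->
    exists y', [/\ y' < n, hadj y y' & capture_time c y' = far_time c].
  by move=> ? ? ?; exists y'; rewrite capture_time_behind.
have ahead y' : y' < n -> hadj y y' -> c + 2 <= y' -> (y' - c) %% 4 = 2 ->
    exists y', [/\ y' < n, hadj y y' & capture_time c y' = far_time c].
  by move=> ? ? ? ?; exists y'; rewrite capture_time_ahead2.
case: (ltnP c y) => [y_gt | y_le].
  have [y_mod2 | y_mod] := eqVneq ((y - c) %% 4) 2.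
    by apply: (ahead y); rewrite ?hadjxx //; lia.
  have [y_mod1 | y_mod3] := eqVneq ((y - c) %% 4) 1.
    case: (ltnP y.+1 n) => [y1_lt | y_top].
      by apply: (ahead y.+1); rewrite // ?/hadj; lia.
    case: (eqVneq y (c + 1)) => [y_c1 | y_ne].
      by apply: (behind (y - 3)); rewrite ?/hadj; lia.
    by apply: (ahead (y - 3)); rewrite ?/hadj; lia.
  by apply: (ahead (y - 1)); rewrite ?/hadj; lia.
case: (leqP (y + 5) c) => [far_below | near_below].
  by apply: (behind y); rewrite ?hadjxx //; lia.
case: (eqVneq y 0) => [y0 | y_gt0].
  case: (leqP c 2) => [c_le2 | c_gt2].
    by apply: (ahead (c + 2)); rewrite ?/hadj; lia.
  by apply: (behind (c - 2)); rewrite ?/hadj; lia.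
case: (eqVneq c (y + 1)) => [c_y1 | c_ne].
  case: (eqVneq y 1) => [y1 | y_ne1]; first by apply: (ahead 4); rewrite ?/hadj; lia.
  by apply: (behind (y - 1)); rewrite ?/hadj; lia.
case: (eqVneq c (y + 2)) => [c_y2 | c_ne2]; first by apply: (behind y); rewrite ?hadjxx //; lia.
case: (eqVneq c (y + 3)) => [c_y3 | c_y4]; first by apply: (behind (y + 1)); rewrite ?/hadj; lia.
by apply: (behind (y - 1)); rewrite ?/hadj; lia.
Qed.

Lemma capture_time_from0_ge y : 5 <= y -> n - 7 <= capture_time 0 y.
Proof.
move=> y_ge; have nadj_0y : ~~ hadj 0 y by rewrite /hadj; lia.
case: (nonadj_cases nadj_0y) => [?|[[? [? ?]]|[[? ?]|[[? ?]|[[? ?]|[? [? ?]]]]]]].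
- lia.
- lia.
- by rewrite capture_time_ahead1 //; lia.
- by rewrite capture_time_ahead3 //; lia.
- by rewrite capture_time_ahead0 //; lia.
- by rewrite capture_time_from0 //; lia.
Qed.

Lemma evade_from0 x y : x < n -> y < n -> ~~ hadj x y -> hadj x 0 -> x != 0 ->
  exists y', [/\ y' < n, hadj y y', y' != 0 & capture_time x y <= (capture_time 0 y').+1].
Proof.
move=> x_lt y_lt nadj_xy adj_x0 x_gt0; have x_le4 : x <= 4 by move: adj_x0; rewrite /hadj; lia.
have stay : 0 < y -> capture_time x y <= (capture_time 0 y).+1 ->
    exists y', [/\ y' < n, hadj y y', y' != 0 & capture_time x y <= (capture_time 0 y').+1].
  by move=> y_gt0 time_le; exists y; rewrite hadjxx -lt0n.
have via_from0 y' : y' < n -> hadj y y' -> 6 <= y' -> y' %% 4 = 2 -> capture_time x y <= n - 4 ->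
    exists y', [/\ y' < n, hadj y y', y' != 0 & capture_time x y <= (capture_time 0 y').+1].
  by move=> ? ? ? ? ?; exists y'; rewrite capture_time_from0 //; split => //; lia.
have via_ahead1 y' : y' < n -> hadj y y' -> 5 <= y' -> y' %% 4 = 1 -> capture_time x y <= n - 3 ->
    exists y', [/\ y' < n, hadj y y', y' != 0 & capture_time x y <= (capture_time 0 y').+1].
  move=> ? ? ? ? ?; exists y'.
  by rewrite [capture_time 0 _]capture_time_ahead1; [split => //; lia | lia | lia].
case: (nonadj_cases nadj_xy) => [?|[[? [? ?]]|[[? ?]|[[? ?]|[[? ?]|[? [? ?]]]]]]].
- by apply: (via_ahead1 5); rewrite ?capture_time_behind ?/hadj ?/far_time; lia.
- case: (eqVneq x 1) => [x1 | x_ne1]; last first.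
    by apply: (via_ahead1 (y + 3 - x)); rewrite ?capture_time_ahead2 ?/hadj ?/far_time; lia.
  case: (eqVneq y 3) => [y3 | y_ne3]; [apply: (via_from0 6) | apply: (via_from0 (y - 1))];
    by rewrite ?capture_time_ahead2 ?/hadj ?/far_time; lia.
- apply: stay; first lia; rewrite capture_time_ahead1 //.
  case: (eqVneq x 1) => [x1 | x_ne1]; first by rewrite capture_time_from0; lia.
  by have := @capture_time_from0_ge y; lia.
- by apply: stay; first lia; rewrite capture_time_ahead3 //; have := @capture_time_from0_ge y; lia.
- by apply: stay; first lia; rewrite capture_time_ahead0 //; have := @capture_time_from0_ge y; lia.
- lia.
Qed.

Lemma climb_move c y : c + 4 <= y -> (y - c) %% 4 = 0 -> y < n ->
  exists y', [/\ y' < n, hadj y y', y' != c & n - 4 - c <= capture_time c y'].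
Proof.
move=> y_ge y_mod y_lt; case: (ltnP y.+1 n) => [y1_lt | y_top].
  by exists y.+1; rewrite capture_time_ahead1; [split; rewrite ?/hadj | |]; lia.
case: (eqVneq y (c + 4)) => [y_c4 | y_ne].
  by exists (y - 3); rewrite capture_time_adj; [split; rewrite ?/hadj | rewrite /hadj |]; lia.
by exists (y - 3); rewrite capture_time_ahead1; [split; rewrite ?/hadj | |]; lia.
Qed.

Lemma evade_aligned x y c : y < n -> 0 < c -> ~~ hadj x y -> hadj x c ->
  c + 4 <= y -> (y - c) %% 4 = 0 ->
  exists y', [/\ y' < n, hadj y y', y' != c & capture_time x y <= (capture_time c y').+1].
Proof.
move=> y_lt c_gt0 nadj_xy adj_xc y_ge y_mod.
case: (ltnP x c) => [x_lt_c | c_le_x].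
  have time_le : capture_time x y <= (n - 4 - c).+1.
    have [?|[?|[?|[x0 ?]]]] : c = x + 1 \/ c = x + 3 \/ c = x + 4 \/ x = 0 /\ c = 2.
      by move: adj_xc; rewrite /hadj; lia.
    - by rewrite capture_time_ahead1; lia.
    - by rewrite capture_time_ahead3; lia.
    - by rewrite capture_time_ahead0; lia.
    - by rewrite x0 capture_time_from0; lia.
  have [y' [y'_lt adj_yy' y'_ne time_ge]] := climb_move y_ge y_mod y_lt.
  by exists y'; split => //; lia.
have y_far : c + 8 <= y by move: nadj_xy adj_xc; rewrite /hadj; lia.
exists y; rewrite hadjxx; split => //; first lia.
rewrite [capture_time c y]capture_time_ahead0; try lia.
have [?|[?|[?|?]]] : x = c \/ x = c + 1 \/ x = c + 3 \/ x = c + 4.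
  by move: adj_xc; rewrite /hadj; lia.
- by rewrite capture_time_ahead0; lia.
- by rewrite capture_time_ahead3; lia.
- by rewrite capture_time_ahead1; lia.
- have y_ne : x + 4 != y by move: nadj_xy; rewrite /hadj; lia.
  by rewrite capture_time_ahead0; lia.
Qed.

Lemma evade_move x y c : x < n -> y < n -> c < n -> ~~ hadj x y -> hadj x c ->
  exists y', [/\ y' < n, hadj y y', y' != c & capture_time x y <= (capture_time c y').+1].
Proof.
move=> x_lt y_lt c_lt nadj_xy adj_xc.
case: (eqVneq c x) => [c_x | c_ne_x].
  by exists y; rewrite hadjxx -c_x (nonadj_adj_neq nadj_xy adj_xc); split.
case: (posnP c) => [c0 | c_gt0].
  by rewrite c0; apply: evade_from0; rewrite // -?c0 1?eq_sym.
case: (boolP ((c + 4 <= y) && ((y - c) %% 4 == 0))) => [/andP [y_ge /eqP y_mod] | not_aligned].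
  exact: evade_aligned.
have y_ne_c : y != c by move: nadj_xy adj_xc; rewrite /hadj; lia.
have [y' [y'_lt adj_yy' time_eq]] := hide_move c_gt0 c_lt y_lt y_ne_c not_aligned.
have x_le : x <= c + 4 by move: adj_xc; rewrite /hadj; lia.
exists y'; split => //.
  by apply/eqP => y'_c; move: time_eq; rewrite y'_c capture_timexx /far_time; lia.
by rewrite time_eq; have := capture_time_le_far x y; rewrite /far_time; lia.
Qed.


Lemma escape_move x c : x < n -> c < n -> x != c -> ~~ ((x == n - 1) && (c == n - 5)) ->
  exists x', [/\ x' < n, hadj x x' & ~~ hadj c x'].
Proof.
move=> x_lt c_lt x_ne_c not_cornered.
have esc x' : x' < n -> hadj x x' -> ~~ hadj c x' ->
    exists x', [/\ x' < n, hadj x x' & ~~ hadj c x'].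
  by move=> ? ? ?; exists x'.
case: (boolP (hadj c x)) => [adj_cx | nadj_cx]; last by apply: (esc x); rewrite ?hadjxx.
case/hadj_cases: adj_cx => [|[|[|[|[|[|[|[|]]]]]]]] => x_pos.
- by move: x_ne_c; rewrite x_pos eqxx.
- case: (eqVneq c 0) => [c0 | c_gt0]; first by apply: (esc 5); rewrite ?/hadj; lia.
  case: (ltnP x.+1 n) => [x1_lt | x_top]; first by apply: (esc x.+1); rewrite ?/hadj; lia.
  by apply: (esc (x - 3)); rewrite ?/hadj; lia.
- case: (leqP x 1) => [x_le1 | x_gt1]; first by apply: (esc (x + 3)); rewrite ?/hadj; lia.
  by apply: (esc (x - 1)); rewrite ?/hadj; lia.
- case: (eqVneq c 0) => [c0 | c_gt0]; first by apply: (esc (x + 3)); rewrite ?/hadj; lia.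
  by apply: (esc (x - 1)); rewrite ?/hadj; lia.
- by apply: (esc x.+1); rewrite ?/hadj; lia.
- by apply: (esc x.+1); rewrite ?/hadj; lia.
- case: (eqVneq x 0) => [x0 | x_gt0]; first by apply: (esc 2); rewrite ?/hadj; lia.
  by apply: (esc (x - 1)); rewrite ?/hadj; lia.
- by apply: (esc 5); rewrite ?/hadj; lia.
- by apply: (esc 4); rewrite ?/hadj; lia.
Qed.

Lemma step_below_top y : y < n -> ~~ hadj (n - 5) y -> exists2 z, hadj y z & z + 6 <= n.
Proof.
move=> y_lt nadj_y; case: (leqP (y + 6) n) => [y_le | y_gt]; first by exists y; rewrite ?hadjxx.
by exists (y - 3); move: nadj_y; rewrite /hadj; lia.
Qed.

Lemma capture_time_top a z : n - 4 <= a -> a < n -> z + 5 <= a \/ z = a + 2 ->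
  capture_time a z = max_time.
Proof.
move=> a_ge a_lt [z_le | z_eq].
  by rewrite capture_time_behind /far_time /max_time; lia.
by rewrite capture_time_ahead2 /far_time /max_time; lia.
Qed.

Lemma start_far c : c < n -> exists p, [/\ p < n, ~~ hadj c p & n - 4 <= capture_time c p].
Proof.
move=> c_lt; case: (eqVneq c 0) => [c0 | c_gt0].
  by exists 5; rewrite c0 capture_time_ahead1; [split; rewrite ?/hadj | |]; lia.
case: (leqP c 4) => [c_le4 | c_gt4].
  by exists (c + 2); rewrite capture_time_ahead2; [split; rewrite ?/hadj ?/far_time | | |]; lia.
by exists 0; rewrite capture_time_behind; [split; rewrite ?/hadj ?/far_time |]; lia.
Qed.

(* The robber at [b] can reach a vertex at capture time [max_time] from [a]
   (capture_time_top), so that capturing the robber at [a] does not pay off. *)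
Definition can_flee (a b : nat) : bool :=
  (n - 4 <= a) && has (fun z => hadj b z && ((z + 5 <= a) || (z == a + 2))) (iota 0 n).

(* The value 0 stands for positions where the robbers claim nothing. *)
Definition evasion_bound (c a b : nat) : nat :=
  if ~~ hadj c a && ~~ hadj c b then minn (capture_time c a) (capture_time c b) + max_time
  else if hadj c a && ~~ hadj c b then (if can_flee a b then max_time.+1 else 0)
  else if ~~ hadj c a && hadj c b then (if can_flee b a then max_time.+1 else 0)
  else if (a != b) && can_flee a b && can_flee b a then max_time.+1 else 0.

Lemma can_fleeI a b z : n - 4 <= a -> z < n -> hadj b z -> z + 5 <= a \/ z = a + 2 ->
  can_flee a b.
Proof.
move=> a_ge z_lt adj_bz z_far; rewrite /can_flee a_ge; apply/hasP; exists z.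
  by rewrite mem_iota.
by rewrite adj_bz; lia.
Qed.

Lemma can_fleeP a b : can_flee a b ->
  n - 4 <= a /\ exists z, [/\ z < n, hadj b z & z + 5 <= a \/ z = a + 2].
Proof.
case/andP => a_ge /hasP [z]; rewrite mem_iota => z_lt /andP [adj_bz z_far].
by split => //; exists z; split => //; lia.
Qed.

Lemma can_flee_top b : b < n -> ~~ hadj (n - 5) b -> can_flee (n - 1) b.
Proof.
move=> b_lt nadj_b; have [z adj_bz z_le] := step_below_top b_lt nadj_b.
by apply: (can_fleeI (z := z)) => //; lia.
Qed.

Lemma evasion_bound_nn c a b : ~~ hadj c a -> ~~ hadj c b ->
  evasion_bound c a b = minn (capture_time c a) (capture_time c b) + max_time.
Proof. by rewrite /evasion_bound => -> ->. Qed.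

Lemma evasion_bound_sym c a b : evasion_bound c a b = evasion_bound c b a.
Proof.
rewrite /evasion_bound eq_sym minnC.
by case: (hadj c a); case: (hadj c b); case: (can_flee a b); case: (can_flee b a); rewrite ?andbF.
Qed.

Lemma evasion_bound_adj c a b : 1 < evasion_bound c a b -> hadj c a || hadj c b ->
  evasion_bound c a b = max_time.+1 /\ a != b.
Proof.
move=> + adj_ab; have adj_ne : hadj c a != hadj c b -> a != b by apply: contra => /eqP ->.
rewrite /evasion_bound; move: adj_ab adj_ne.
case: (hadj c a); case: (hadj c b) => //= _ adj_ne; case: ifP => // flee _; split => //.
all: first [exact: adj_ne | by case/andP: flee => /andP []].
Qed.

Lemma evasion_bound_flee c a b : 1 < evasion_bound c a b -> hadj c a -> can_flee a b.
Proof.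
rewrite /evasion_bound => + adj_ca; rewrite adj_ca /=.
case: (hadj c b) => /=; case: ifP => // flee _; first [done | by case/andP: flee => /andP []].
Qed.

Lemma evasion_bound_cornered a : a < n -> ~~ hadj (n - 5) a ->
  evasion_bound (n - 5) a (n - 1) = max_time.+1.
Proof.
move=> a_lt nadj_a; have adj_top : hadj (n - 5) (n - 1) by rewrite /hadj; lia.
by rewrite /evasion_bound adj_top (negbTE nadj_a) /= can_flee_top.
Qed.

Lemma evasion_bound_top : evasion_bound (n - 5) (n - 4) (n - 2) = max_time.+1.
Proof.
have flee1 : can_flee (n - 4) (n - 2) by apply: (can_fleeI (z := n - 2)); rewrite ?hadjxx; lia.
have flee2 : can_flee (n - 2) (n - 4) by apply: (can_fleeI (z := n - 7)); rewrite ?/hadj; lia.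
have adj1 : hadj (n - 5) (n - 4) by rewrite /hadj; lia.
have adj2 : hadj (n - 5) (n - 2) by rewrite /hadj; lia.
have ne : n - 4 != n - 2 by lia.
by rewrite /evasion_bound adj1 adj2 flee1 flee2 ne.
Qed.

Lemma evade_or_cornered c x c' : c < n -> x < n -> c' < n -> ~~ hadj c x -> hadj c c' ->
  (exists x', [/\ x' < n, hadj x x', ~~ hadj c' x' & capture_time c x <= (capture_time c' x').+1])
  \/ [/\ x = n - 1, c' = n - 5 & capture_time c x = 2].
Proof.
move=> c_lt x_lt c'_lt nadj_cx adj_cc'.
have time_ge2 := capture_time_nonadj_ge2 c_lt x_lt nadj_cx.
case: (leqP 3 (capture_time c x)) => [time_ge3 | time_le2].
  have [x' [x'_lt adj_xx' x'_ne delay]] := evade_move c_lt x_lt c'_lt nadj_cx adj_cc'.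
  left; exists x'; split => //; apply: contraTN delay => /capture_time_adj_le1; lia.
case: (boolP ((x == n - 1) && (c' == n - 5))) => [/andP [/eqP x_top /eqP c'_top] | not_cornered].
  by right; split => //; lia.
have [x' [x'_lt adj_xx' nadj_c'x']] :=
  escape_move x_lt c'_lt (nonadj_adj_neq nadj_cx adj_cc') not_cornered.
left; exists x'; split => //.
by have := capture_time_nonadj_ge2 c'_lt x'_lt nadj_c'x'; lia.
Qed.

Lemma escape_pair a b c' : a < n -> b < n -> c' < n -> a != c' -> b != c' -> a != b ->
  exists a' b', [/\ a' < n, b' < n, hadj a a', hadj b b' &
    [/\ a' != c', b' != c' & max_time <= evasion_bound c' a' b']].
Proof.
move=> a_lt b_lt c'_lt a_ne b_ne a_ne_b.
have far_ne z : ~~ hadj c' z -> z != c' by move/nonadj_adj_neq; apply; apply: hadjxx.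
case: (boolP ((a == n - 1) && (c' == n - 5))) => [/andP [/eqP a_top /eqP c'_top] | a_free].
  have b_free : ~~ ((b == n - 1) && (c' == n - 5)) by rewrite -a_top eq_sym (negbTE a_ne_b).
  have [b' [b'_lt adj_bb' nadj_b']] := escape_move b_lt c'_lt b_ne b_free.
  exists a, b'; split; rewrite ?hadjxx //; split; [done | exact: far_ne |].
  by rewrite evasion_bound_sym a_top c'_top evasion_bound_cornered -?c'_top.
case: (boolP ((b == n - 1) && (c' == n - 5))) => [/andP [/eqP b_top /eqP c'_top] | b_free].
  have [a' [a'_lt adj_aa' nadj_a']] := escape_move a_lt c'_lt a_ne a_free.
  exists a', b; split; rewrite ?hadjxx //; split; [exact: far_ne | done |].
  by rewrite b_top c'_top evasion_bound_cornered -?c'_top.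
have [a' [a'_lt adj_aa' nadj_a']] := escape_move a_lt c'_lt a_ne a_free.
have [b' [b'_lt adj_bb' nadj_b']] := escape_move b_lt c'_lt b_ne b_free.
by exists a', b'; rewrite !far_ne // evasion_bound_nn // leq_addl.
Qed.

Lemma evade_pair c a b c' : c < n -> a < n -> b < n -> c' < n ->
  ~~ hadj c a -> ~~ hadj c b -> hadj c c' ->
  exists a' b', [/\ a' < n, b' < n, hadj a a', hadj b b' &
    [/\ a' != c', b' != c' & evasion_bound c a b <= (evasion_bound c' a' b').+1]].
Proof.
move=> c_lt a_lt b_lt c'_lt nadj_ca nadj_cb adj_cc'.
have far_ne z : ~~ hadj c' z -> z != c' by move/nonadj_adj_neq; apply; apply: hadjxx.
have time_a := capture_time_nonadj_ge2 c_lt a_lt nadj_ca.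
have time_b := capture_time_nonadj_ge2 c_lt b_lt nadj_cb.
rewrite evasion_bound_nn //.
case: (evade_or_cornered c_lt a_lt c'_lt nadj_ca adj_cc') =>
  [[a' [a'_lt adj_aa' nadj_a' delay_a]] | [a_top c'_top time_a2]];
case: (evade_or_cornered c_lt b_lt c'_lt nadj_cb adj_cc') =>
  [[b' [b'_lt adj_bb' nadj_b' delay_b]] | [b_top c'_top' time_b2]].
- exists a', b'; split => //; split; rewrite ?far_ne // evasion_bound_nn //; lia.
- exists a', b; split => //; rewrite ?hadjxx //; split; [exact: far_ne | lia |].
  by rewrite time_b2 b_top c'_top' evasion_bound_cornered -?c'_top' //; lia.
- exists a, b'; split => //; rewrite ?hadjxx //; split; [lia | exact: far_ne |].
  by rewrite time_a2 a_top c'_top evasion_bound_sym evasion_bound_cornered -?c'_top //; lia.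
- exists (n - 4), (n - 2); rewrite time_a2 time_b2 a_top b_top c'_top evasion_bound_top.
  by split; rewrite ?/hadj; try lia; split; lia.
Qed.

Local Notation G := (Hgraph n).

Definition capture_time_opt (c : 'I_n) (o : option 'I_n) :=
  if o is Some r then capture_time c r else 0.

Lemma chase_step (c r : 'I_n) : r != c -> exists2 c' : 'I_n, G c c' &
  forall o, robber_step G (capture1 c' (Some r)) o ->
    capture_time_opt c' (capture1 c' o) < capture_time c r.
Proof.
move=> r_ne_c; have time_gt0 : 0 < capture_time c r.
  by apply: capture_time_gt0; rewrite // eq_sym.
case: (boolP (hadj c r)) => [adj_cr | nadj_cr].
  exists r; first by rewrite HgraphE.
  by move=> o; rewrite capture1_some eqxx => /robber_step_none ->.
have [c'_lt adj_cc' closer] := chase_moveP (ltn_ord c) (ltn_ord r) nadj_cr.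
exists (Ordinal c'_lt); first by rewrite HgraphE.
have r_ne_c' : (r : nat) != chase_move c r.
  by apply: contraNneq nadj_cr => r_eq; rewrite [X in hadj _ X]r_eq.
move=> o; rewrite capture1_some -val_eqE /= (negbTE r_ne_c') => /robber_step_some [r' -> adj_rr'].
rewrite capture1_some -val_eqE /=; case: eqP => // /eqP r'_ne.
rewrite HgraphE in adj_rr'; case: (closer r' adj_rr') => // r'_eq.
by rewrite r'_eq eqxx in r'_ne.
Qed.

Definition chase_pot (c : 'I_n) (o0 o1 : option 'I_n) : nat :=
  match o0, o1 with
  | Some a, Some _ => capture_time c a + max_time
  | Some a, None | None, Some a => capture_time c a
  | None, None => 0
  end.

Lemma chase_pot_none_l c o : chase_pot c None o = capture_time_opt c o.
Proof. by case: o. Qed.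

Lemma chase_pot_none_r c o : chase_pot c o None = capture_time_opt c o.
Proof. by case: o. Qed.

Lemma chase_pot_le c o0 o1 : chase_pot c o0 o1 <= capture_time_opt c o0 + max_time.
Proof.
case: o0 o1 => [a|] [b|] //=; rewrite ?leq_addr //.
exact: capture_time_le_max.
Qed.

Lemma chase_pot_gt0 (c : 'I_n) o0 o1 : o0 != Some c -> o1 != Some c ->
  ~~ ((o0 == None) && (o1 == None)) -> 0 < chase_pot c o0 o1.
Proof.
have time_gt0 (r : 'I_n) : Some r != Some c -> 0 < capture_time c r.
  by move=> r_ne_c; apply: capture_time_gt0; rewrite // eq_sym.
by case: o0 o1 => [a|] [b|] //= a_free b_free _; rewrite ?addn_gt0 time_gt0.
Qed.

Lemma chase_pot_decrease (c : 'I_n) o0 o1 : o0 != Some c -> o1 != Some c ->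
  ~~ ((o0 == None) && (o1 == None)) -> exists2 c', G c c' &
  forall o0' o1', robber_step G (capture1 c' o0) o0' -> robber_step G (capture1 c' o1) o1' ->
    chase_pot c' (capture1 c' o0') (capture1 c' o1') < chase_pot c o0 o1.
Proof.
move=> free0 free1 live; case: o0 free0 live => [a|] a_free live; last first.
  case: o1 free1 live => [b|] // b_free _; have [c' adj_cc' closer] := chase_step b_free.
  by exists c' => // o0' o1' /robber_step_none -> /closer; rewrite chase_pot_none_l.
have [c' adj_cc' closer] := chase_step a_free.
exists c' => // o0' o1' /closer a_closer; case: o1 free1 live => [b|] _ _.
  by move=> _; apply: leq_ltn_trans (chase_pot_le _ _ _) _; rewrite ltn_add2r.
by move=> /robber_step_none ->; rewrite chase_pot_none_r.
Qed.

Definition evasion_pot (c : 'I_n) (o0 o1 : option 'I_n) : nat :=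
  match o0, o1 with
  | Some a, Some b => evasion_bound c a b
  | Some a, None | None, Some a => capture_time c a
  | None, None => 0
  end.

Lemma evasion_pot_sym c o0 o1 : evasion_pot c o0 o1 = evasion_pot c o1 o0.
Proof. by case: o0 o1 => [a|] [b|] //=; rewrite evasion_bound_sym. Qed.

Definition evades (c c' : 'I_n) (o0 o1 : option 'I_n) :=
  exists o0' o1', [/\ robber_step G (capture1 c' o0) o0', robber_step G (capture1 c' o1) o1' &
    evasion_pot c o0 o1 <= (evasion_pot c' (capture1 c' o0') (capture1 c' o1')).+1].

Lemma evades_sym c c' o0 o1 : evades c c' o1 o0 -> evades c c' o0 o1.
Proof.
case=> o1' [o0' [step1 step0]]; rewrite evasion_pot_sym [evasion_pot c' _ _]evasion_pot_sym.
by exists o0', o1'.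
Qed.

Lemma evades_one (c c' a : 'I_n) : G c c' -> 1 < capture_time c a ->
  evades c c' (Some a) None.
Proof.
rewrite HgraphE => adj_cc' time_gt1.
have nadj_ca : ~~ hadj c a by apply: contraTN time_gt1 => /capture_time_adj_le1; rewrite leqNgt.
have a_ne_c' := nonadj_adj_neq nadj_ca adj_cc'.
have [a' [a'_lt adj_aa' a'_ne_c' delay]] :=
  evade_move (ltn_ord c) (ltn_ord a) (ltn_ord c') nadj_ca adj_cc'.
exists (Some (Ordinal a'_lt)), None.
by rewrite !capture1_some -!val_eqE /= (negbTE a_ne_c') (negbTE a'_ne_c') /= HgraphE; split.
Qed.

Lemma evades_capture (c a b : 'I_n) : can_flee a b -> b != a ->
  evasion_bound c a b <= max_time.+1 -> evades c a (Some a) (Some b).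
Proof.
move=> /can_fleeP [a_top [z [z_lt adj_bz far_z]]] b_ne_a bound_le.
have z_ne_a : z != a by lia.
exists None, (Some (Ordinal z_lt)).
rewrite !capture1_some eqxx (negbTE b_ne_a) -val_eqE /= (negbTE z_ne_a) /=.
by rewrite HgraphE capture_time_top.
Qed.

Lemma evades_pair (c c' a b : 'I_n) (a' b' : nat) : a' < n -> b' < n ->
  a != c' -> b != c' -> hadj a a' -> hadj b b' -> a' != c' -> b' != c' ->
  evasion_bound c a b <= (evasion_bound c' a' b').+1 -> evades c c' (Some a) (Some b).
Proof.
move=> a'_lt b'_lt a_ne b_ne adj_aa' adj_bb' a'_ne b'_ne delay.
exists (Some (Ordinal a'_lt)), (Some (Ordinal b'_lt)).
rewrite !capture1_some (negbTE a_ne) (negbTE b_ne) -!val_eqE /=.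
by rewrite (negbTE a'_ne) (negbTE b'_ne) /= !HgraphE; split.
Qed.

Lemma evades_escape (c c' a b : 'I_n) : a != c' -> b != c' -> a != b ->
  evasion_bound c a b <= max_time.+1 -> evades c c' (Some a) (Some b).
Proof.
move=> a_ne b_ne a_ne_b bound_le.
have [a' [b' [a'_lt b'_lt adj_aa' adj_bb' [a'_ne b'_ne bound_ge]]]] :=
  escape_pair (ltn_ord a) (ltn_ord b) (ltn_ord c') a_ne b_ne a_ne_b.
by apply: (evades_pair a'_lt b'_lt) => //; apply: leq_trans bound_le _.
Qed.

Lemma evades_apart (c c' a b : 'I_n) : ~~ hadj c a -> ~~ hadj c b -> G c c' ->
  evades c c' (Some a) (Some b).
Proof.
rewrite HgraphE => nadj_ca nadj_cb adj_cc'.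
have [a' [b' [a'_lt b'_lt adj_aa' adj_bb' [a'_ne b'_ne delay]]]] :=
  evade_pair (ltn_ord c) (ltn_ord a) (ltn_ord b) (ltn_ord c') nadj_ca nadj_cb adj_cc'.
by apply: (evades_pair a'_lt b'_lt) => //; apply: nonadj_adj_neq adj_cc'.
Qed.

Lemma evasion_pot_evade (c c' : 'I_n) o0 o1 : o0 != Some c -> o1 != Some c ->
  1 < evasion_pot c o0 o1 -> G c c' -> evades c c' o0 o1.
Proof.
case: o0 o1 => [a|] [b|] // a_free b_free /= pot_gt1 adj_cc'; last 2 first.
- exact: evades_one.
- exact/evades_sym/evades_one.
case: (boolP (hadj c a || hadj c b)) => [adj_ab | ]; last first.
  by rewrite negb_or => /andP [nadj_ca nadj_cb]; apply: evades_apart.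
have [bound_eq a_ne_b] := evasion_bound_adj pot_gt1 adj_ab.
case: (eqVneq c' a) => [c'_a | c'_ne_a].
  rewrite c'_a HgraphE in adj_cc' *; apply: evades_capture; rewrite ?bound_eq //.
    exact: evasion_bound_flee pot_gt1 adj_cc'.
  by rewrite eq_sym.
case: (eqVneq c' b) => [c'_b | c'_ne_b].
  rewrite c'_b HgraphE in adj_cc' *; rewrite evasion_bound_sym in pot_gt1 bound_eq.
  apply/evades_sym/evades_capture; rewrite ?bound_eq //.
  exact: evasion_bound_flee pot_gt1 adj_cc'.
by apply: evades_escape; rewrite ?bound_eq // eq_sym.
Qed.

Lemma capt_le_Hgraph : capt_le G 2 (n - 4 + max_time).
Proof.
pose pot c (R : rstate 'I_n 2) := chase_pot c (R ord0) (R ord_max).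
have pot_gt0 c R : robber_free c R -> ~~ all_captured R -> 0 < pot c R.
  by rewrite robber_freeE all_capturedE => /andP [f0 f1]; apply: chase_pot_gt0.
have pot_chase c R : robber_free c R -> ~~ all_captured R -> exists2 c', G c c' &
    forall R', robber_move G (capture c' R) R' -> pot c' (capture c' R') < pot c R.
  rewrite robber_freeE all_capturedE => /andP [f0 f1] live.
  have [c' adj_cc' decrease] := chase_pot_decrease f0 f1 live.
  exists c' => // R'; rewrite robber_moveE /pot !captureE => /andP [step0 step1].
  exact: decrease step0 step1.
apply/existsP; exists (Ordinal (leq_trans (isT : 0 < 10) n_ge10)); apply/forallP => r.
apply: (win_within_pot pot_gt0 pot_chase); first exact: robber_free_capture.
rewrite /pot !captureE; apply: leq_trans (chase_pot_le _ _ _) _; rewrite leq_add2r.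
case: (capture1 _ _) => [a|] //=; apply: leq_trans (capture_time_le_far _ _) _.
by rewrite /far_time /=; lia.
Qed.

Lemma not_capt_le_Hgraph T : T < n - 4 + max_time -> ~~ capt_le G 2 T.
Proof.
move=> T_lt; pose pot c (R : rstate 'I_n 2) := evasion_pot c (R ord0) (R ord_max).
have pot_captured c R : all_captured R -> pot c R = 0.
  by rewrite all_capturedE /pot => /andP [/eqP -> /eqP ->].
have pot_evade c R c' : robber_free c R -> 1 < pot c R -> G c c' ->
    exists2 R', robber_move G (capture c' R) R' & pot c R <= (pot c' (capture c' R')).+1.
  rewrite robber_freeE => /andP [f0 f1] pot_gt1 adj_cc'.
  have [o0 [o1 [step0 step1 delay]]] := evasion_pot_evade f0 f1 pot_gt1 adj_cc'.
  exists (rpair o0 o1); first by rewrite robber_moveE !captureE rpair0 rpair1 step0 step1.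
  by rewrite /pot !captureE rpair0 rpair1.
rewrite negb_exists; apply/forallP => c0; rewrite negb_forall; apply/existsP.
have [p [p_lt nadj_c0p far_p]] := start_far (ltn_ord c0).
exists [ffun _ => Ordinal p_lt].
apply: (not_win_within_pot pot_captured pot_evade); first exact: robber_free_capture.
have p_ne_c0 : p != c0 by apply: contraNneq nadj_c0p => ->; apply: hadjxx.
rewrite /pot !captureE !ffunE capture1_some -val_eqE /= (negbTE p_ne_c0) /=.
by rewrite evasion_bound_nn // minnn; lia.
Qed.

End CaptureTime.

Theorem mainTheorem6 (l : nat) (hl : 2 <= l) :
  capt_is (Hgraph (4 * l + 2)) 2 (l + 2 * ((4 * l + 2) - 4)).
Proof.
have n_ge10 : 10 <= 4 * l + 2 by lia.
have n_mod4 : (4 * l + 2) %% 4 = 2 by lia.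
have -> : l + 2 * (4 * l + 2 - 4) = 4 * l + 2 - 4 + max_time (4 * l + 2).
  by rewrite /max_time; lia.
split; first exact: capt_le_Hgraph.
by move=> T T_lt; apply: not_capt_le_Hgraph.
Qed.
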